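(* If $T$ is totally positive, then $X^\mathrm{mon}\otimes_{k^\mathrm{mon}}T$ is a tropicalization of $X$ along $v$.
   Context: Let $k$ be an ordered blueprint and $B$ an ordered blue $k$-algebra, i.e. a morphism $k\to B$ of ordered blueprints; let $X=\operatorname{Spec}B$. For an ordered blueprint $C$, its associated monomial blueprint $C^\mathrm{mon}$ has the same underlying monoid as $C$, with partial order (subaddition) generated by the left monomial relations $a\leq\sum b_j$ ($a,b_j$ in the underlying monoid) that hold in $C$; its associated totally positive blueprint $C^\mathrm{pos}$ is $C$ with the additional relation $0\leq 1$ adjoined. An ordered blueprint $T$ is totally positive if $0\leq 1$ holds in $T$. A valuation $v:k\to T$ between ordered blueprints is a multiplicative map (a morphism of underlying monoids) such that the composition $k^\mathrm{mon}\to k\xrightarrow{v}T\to T^\mathrm{pos}$ is a morphism of ordered blueprints. For an ordered blue $T$-algebra $S$, let $\mathrm{Val}_v(B,S)$ be the set of valuations $w:B\to S$ that extend $v$, i.e. such that the square formed by $k\to B$, $v:k\to T$, $w:B\to S$ and $T\to S$ commutes. A tropicalization of $X$ along $v$ is an ordered blue $T$-scheme that represents the functor $S\mapsto\mathrm{Val}_v(B,S)$ on ordered blue $T$-algebras. Here $X^\mathrm{mon}=\operatorname{Spec}B^\mathrm{mon}$, and the tensor product $\otimes_{k^\mathrm{mon}}$ is taken in the category of ordered blueprints (base change along $k^\mathrm{mon}\to T$). *)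

From Stdlib Require Import List Permutation ClassicalEpsilon.
Import ListNotations.
Set Implicit Arguments.

(* ---------- Raw data of an ordered blueprint: an ordered semiring B^+
   (carrier) with a distinguished multiplicative subset B^• (ob_mono). *)
Record OB := {
  ob_car  : Type;
  ob_zero : ob_car;
  ob_one  : ob_car;
  ob_add  : ob_car -> ob_car -> ob_car;
  ob_mul  : ob_car -> ob_car -> ob_car;
  ob_le   : ob_car -> ob_car -> Prop;
  ob_mono : ob_car -> Prop }.

Definition msort (B : OB) : Type := { x : ob_car B | ob_mono B x }.

Definition sumlist (B : OB) (l : list (ob_car B)) : ob_car B :=
  fold_right (ob_add B) (ob_zero B) l.

Record is_OB (B : OB) : Prop := {
  obH_addA : forall x y z, ob_add B x (ob_add B y z) = ob_add B (ob_add B x y) z;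
  obH_addC : forall x y, ob_add B x y = ob_add B y x;
  obH_add0 : forall x, ob_add B (ob_zero B) x = x;
  obH_mulA : forall x y z, ob_mul B x (ob_mul B y z) = ob_mul B (ob_mul B x y) z;
  obH_mulC : forall x y, ob_mul B x y = ob_mul B y x;
  obH_mul1 : forall x, ob_mul B (ob_one B) x = x;
  obH_mul0 : forall x, ob_mul B (ob_zero B) x = ob_zero B;
  obH_distr : forall x y z,
      ob_mul B x (ob_add B y z) = ob_add B (ob_mul B x y) (ob_mul B x z);
  obH_le_refl : forall x, ob_le B x x;
  obH_le_trans : forall x y z, ob_le B x y -> ob_le B y z -> ob_le B x z;
  obH_le_antisym : forall x y, ob_le B x y -> ob_le B y x -> x = y;
  obH_le_add : forall x y z, ob_le B x y -> ob_le B (ob_add B x z) (ob_add B y z);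
  obH_le_mul : forall x y z, ob_le B x y -> ob_le B (ob_mul B x z) (ob_mul B y z);
  obH_mono0 : ob_mono B (ob_zero B);
  obH_mono1 : ob_mono B (ob_one B);
  obH_monoM : forall x y, ob_mono B x -> ob_mono B y -> ob_mono B (ob_mul B x y);
  obH_gen : forall x, exists l : list (msort B),
      x = sumlist B (map (@proj1_sig _ _) l) }.

Record is_mor (B C : OB) (f : ob_car B -> ob_car C) : Prop := {
  mor_zero : f (ob_zero B) = ob_zero C;
  mor_one  : f (ob_one B) = ob_one C;
  mor_add  : forall x y, f (ob_add B x y) = ob_add C (f x) (f y);
  mor_mul  : forall x y, f (ob_mul B x y) = ob_mul C (f x) (f y);
  mor_le   : forall x y, ob_le B x y -> ob_le C (f x) (f y);
  mor_mono : forall x, ob_mono B x -> ob_mono C (f x) }.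

Definition is_mult (B C : OB) (w : msort B -> msort C) : Prop :=
  (forall H0 : ob_mono B (ob_zero B), proj1_sig (w (exist _ _ H0)) = ob_zero C) /\
  (forall H1 : ob_mono B (ob_one B), proj1_sig (w (exist _ _ H1)) = ob_one C) /\
  (forall x y (Hx : ob_mono B x) (Hy : ob_mono B y) (Hxy : ob_mono B (ob_mul B x y)),
      proj1_sig (w (exist _ _ Hxy)) =
      ob_mul C (proj1_sig (w (exist _ _ Hx))) (proj1_sig (w (exist _ _ Hy)))).

Record Mon := { m_car : Type; m_one : m_car; m_zero : m_car;
                m_mul : m_car -> m_car -> m_car }.

Definition obmon (B : OB) (HB : is_OB B) : Mon := {|
  m_car := msort B;
  m_one := exist _ _ (obH_mono1 HB);
  m_zero := exist _ _ (obH_mono0 HB);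
  m_mul := fun x y => exist _ (ob_mul B (proj1_sig x) (proj1_sig y))
                         (obH_monoM HB _ _ (proj2_sig x) (proj2_sig y)) |}.

(* ---------- Presented ordered blueprint < M | R >: the semiring N[M]
   (finite formal sums = lists up to permutation, 0_M identified with the
   empty sum), modulo the smallest additive and multiplicative preorder
   containing R; B^• = image of M. *)
Definition lmul (M : Mon) (l m : list (m_car M)) : list (m_car M) :=
  flat_map (fun a => map (fun b => m_mul M a b) m) l.

Inductive genle (M : Mon) (R : list (m_car M) -> list (m_car M) -> Prop)
  : list (m_car M) -> list (m_car M) -> Prop :=
| gl_rel : forall l l', R l l' -> genle M R l l'
| gl_zero1 : genle M R [m_zero M] []
| gl_zero2 : genle M R [] [m_zero M]
| gl_perm : forall l l', Permutation l l' -> genle M R l l'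
| gl_trans : forall l l' l'', genle M R l l' -> genle M R l' l'' -> genle M R l l''
| gl_add : forall l l' m, genle M R l l' -> genle M R (l ++ m) (l' ++ m)
| gl_mul : forall l l' m, genle M R l l' -> genle M R (lmul M l m) (lmul M l' m).

Arguments genle {M} R _ _.

Definition gequiv (M : Mon) (R : list (m_car M) -> list (m_car M) -> Prop)
  (l l' : list (m_car M)) : Prop := genle R l l' /\ genle R l' l.

Arguments gequiv {M} R l l'.

Definition qcar (M : Mon) (R : list (m_car M) -> list (m_car M) -> Prop) : Type :=
  { P : list (m_car M) -> Prop | exists l, P = gequiv R l }.

Arguments qcar {M} R.

Definition cls (M : Mon) (R : list (m_car M) -> list (m_car M) -> Prop)
  (l : list (m_car M)) : qcar R :=
  exist _ (gequiv R l) (ex_intro _ l eq_refl).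

Arguments cls {M} R l.

Definition rep (M : Mon) (R : list (m_car M) -> list (m_car M) -> Prop)
  (x : qcar R) : list (m_car M) :=
  proj1_sig (constructive_indefinite_description _ (proj2_sig x)).

Arguments rep {M R} x.

Definition pres (M : Mon) (R : list (m_car M) -> list (m_car M) -> Prop) : OB := {|
  ob_car := qcar R;
  ob_zero := cls R [];
  ob_one := cls R [m_one M];
  ob_add := fun x y => cls R (rep x ++ rep y);
  ob_mul := fun x y => cls R (lmul M (rep x) (rep y));
  ob_le := fun x y => genle R (rep x) (rep y);
  ob_mono := fun x => exists a, x = cls R [a] |}.

Arguments pres {M} R.

Definition pres_map (M N : Mon) (RM : list (m_car M) -> list (m_car M) -> Prop)
  (RN : list (m_car N) -> list (m_car N) -> Prop) (h : m_car M -> m_car N)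
  : ob_car (pres RM) -> ob_car (pres RN) :=
  fun x => cls RN (map h (rep x)).

Arguments pres_map {M N RM RN} h _.

Definition Rmon (B : OB) (HB : is_OB B) (l l' : list (m_car (obmon HB))) : Prop :=
  exists a : msort B, l = [a] /\
    ob_le B (proj1_sig a) (sumlist B (map (@proj1_sig _ _) l')).

Arguments Rmon {B} HB l l'.

Definition Bmon (B : OB) (HB : is_OB B) : OB := pres (Rmon HB).

Definition Rpos (C : OB) (HC : is_OB C) (l l' : list (m_car (obmon HC))) : Prop :=
  ob_le C (sumlist C (map (@proj1_sig _ _) l)) (sumlist C (map (@proj1_sig _ _) l'))
  \/ (l = [] /\ l' = [m_one (obmon HC)]).

Arguments Rpos {C} HC l l'.

Definition Bpos (C : OB) (HC : is_OB C) : OB := pres (Rpos HC).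

Arguments Bmon {B} HB.
Arguments Bpos {C} HC.

Definition totally_positive (T : OB) : Prop := ob_le T (ob_zero T) (ob_one T).

Definition is_valuation (A C : OB) (HA : is_OB A) (HC : is_OB C)
  (v : msort A -> msort C) : Prop :=
  is_mult v /\
  is_mor (Bmon HA) (Bpos HC)
    (@pres_map (obmon HA) (obmon HC) (Rmon HA) (Rpos HC) v).
Arguments is_valuation {A C} HA HC v.

(* ---------- Tensor product (pushout) C (x)_A D, where A = <M|..> is a
   presented blueprint and C, D come with generating monoids MC, MD
   (eC, eD : generators -> C, D) and A -> C, A -> D are given on generators
   by f, g.  Presentation: generators MC x MD, relations: the relations of
   C on (c,1), of D on (1,d), (0,1) = (1,0) = 0, and (c f(a), d) = (c, g(a) d). *)
Definition prodmon (MC MD : Mon) : Mon := {|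
  m_car := (m_car MC * m_car MD)%type;
  m_one := (m_one MC, m_one MD);
  m_zero := (m_zero MC, m_zero MD);
  m_mul := fun x y => (m_mul MC (fst x) (fst y), m_mul MD (snd x) (snd y)) |}.

Section Tens.
Variables (M MC MD : Mon) (C D : OB) (eC : m_car MC -> ob_car C)
  (eD : m_car MD -> ob_car D) (f : m_car M -> m_car MC) (g : m_car M -> m_car MD).

Definition Rtens_eq (l l' : list (m_car (prodmon MC MD))) : Prop :=
  (l = [(m_zero MC, m_one MD)] /\ l' = []) \/
  (l = [(m_one MC, m_zero MD)] /\ l' = []) \/
  (exists a c d, l = [(m_mul MC c (f a), d)] /\ l' = [(c, m_mul MD (g a) d)]).

Definition Rtens (l l' : list (m_car (prodmon MC MD))) : Prop :=
  Rtens_eq l l' \/ Rtens_eq l' l \/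
  (exists lc lc', l = map (fun c => (c, m_one MD)) lc /\
     l' = map (fun c => (c, m_one MD)) lc' /\
     ob_le C (sumlist C (map eC lc)) (sumlist C (map eC lc'))) \/
  (exists ld ld', l = map (fun d => (m_one MC, d)) ld /\
     l' = map (fun d => (m_one MC, d)) ld' /\
     ob_le D (sumlist D (map eD ld)) (sumlist D (map eD ld'))).

Definition tens : OB := pres Rtens.
End Tens.

Section Trop.
Variables (k B T : OB) (Hk : is_OB k) (HB : is_OB B) (HT : is_OB T)
  (phi : ob_car k -> ob_car B) (Hphi : is_mor k B phi)
  (v : msort k -> msort T).

Definition phim (a : msort k) : msort B :=
  exist _ (phi (proj1_sig a)) (mor_mono Hphi _ (proj2_sig a)).

(* X^mon (x)_{k^mon} T (its ordered blueprint of global sections) *)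
Definition tropB : OB :=
  @tens (obmon Hk) (obmon HB) (obmon HT) (Bmon HB) T
    (fun b => @cls (obmon HB) (Rmon HB) [b]) (@proj1_sig _ _) phim v.

Definition tropT (t : ob_car T) : ob_car tropB :=
  @cls (prodmon (obmon HB) (obmon HT)) _ (map (fun ti => (m_one (obmon HB), ti))
     (proj1_sig (constructive_indefinite_description _ (obH_gen HT t)))).

Definition HomT (S : OB) (sigma : ob_car T -> ob_car S) : Type :=
  { h : ob_car tropB -> ob_car S |
      is_mor tropB S h /\ forall t, h (tropT t) = sigma t }.

Definition ValSet (S : OB) (HS : is_OB S) (sigma : ob_car T -> ob_car S) : Type :=
  { w : msort B -> msort S |
      is_valuation HB HS w /\
      forall a : msort k, proj1_sig (w (phim a)) = sigma (proj1_sig (v a)) }.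
End Trop.

Definition bijective (X Y : Type) (F : X -> Y) : Prop :=
  (forall x y, F x = F y -> x = y) /\ (forall y, exists x, F x = y).

(* A T-algebra morphism h out of X^mon (x)_{k^mon} T is determined by the values
   h(b (x) 1), and b |-> h(b (x) 1) is multiplicative and preserves the left monomial
   relations a <= sum b_j of B, hence is a valuation extending v. Conversely a
   valuation w extending v yields h(sum b_i (x) t_i) := sum w(b_i) sigma(t_i), which
   is well defined as soon as w preserves the monomial relations of B. This is where
   total positivity enters: a valuation only induces a morphism B^mon -> S^pos, but
   in B^mon a monomial x is equivalent only to sums x + sum e_i with all e_i <= 0
   (or, when x = 0, to sums of such e_i), and S is totally positive because T is, so
   w sends every such e_i to 0. *)

From Stdlib Require Import List Permutation ClassicalEpsilon ProofIrrelevance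
  FunctionalExtensionality PropExtensionality.
Import ListNotations.
Set Implicit Arguments.

Lemma sig_eq (A : Type) (P : A -> Prop) (x y : {a | P a}) :
  proj1_sig x = proj1_sig y -> x = y.
Proof. apply eq_sig_hprop; intros; apply proof_irrelevance. Qed.

Lemma sumlist_cons (B : OB) x l : sumlist B (x :: l) = ob_add B x (sumlist B l).
Proof. reflexivity. Qed.

Section OBTheory.
Variables (B : OB) (HB : is_OB B).
Notation "x + y" := (ob_add B x y).
Notation "x * y" := (ob_mul B x y).
Notation "0" := (ob_zero B).
Notation "1" := (ob_one B).
Notation "x <= y" := (ob_le B x y).

Lemma ob_addr0 x : x + 0 = x.
Proof. rewrite (obH_addC HB); apply (obH_add0 HB). Qed.

Lemma ob_mulr1 x : x * 1 = x.
Proof. rewrite (obH_mulC HB); apply (obH_mul1 HB). Qed.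

Lemma ob_mulr0 x : x * 0 = 0.
Proof. rewrite (obH_mulC HB); apply (obH_mul0 HB). Qed.

Lemma ob_mulDl x y z : (x + y) * z = x * z + y * z.
Proof. rewrite (obH_mulC HB), (obH_distr HB), !(obH_mulC HB z); reflexivity. Qed.

Lemma ob_mulACA a b c d : (a * b) * (c * d) = (a * c) * (b * d).
Proof.
  rewrite !(obH_mulA HB); f_equal.
  rewrite <- !(obH_mulA HB); f_equal; apply (obH_mulC HB).
Qed.

Lemma ob_le_eq x y : x = y -> x <= y.
Proof. intros ->; apply (obH_le_refl HB). Qed.

Lemma ob_le_addl x y z : x <= y -> z + x <= z + y.
Proof. intro H; rewrite !(obH_addC HB z); apply (obH_le_add HB), H. Qed.

Lemma ob_le_add x y x' y' : x <= y -> x' <= y' -> x + x' <= y + y'.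
Proof.
  intros H H'; apply (obH_le_trans HB) with (y + x').
  - apply (obH_le_add HB), H.
  - apply ob_le_addl, H'.
Qed.

Lemma totally_positive_ge0 : 0 <= 1 -> forall x, 0 <= x.
Proof.
  intros Hpos x; pose proof (obH_le_mul HB _ _ x Hpos) as H.
  rewrite (obH_mul0 HB), (obH_mul1 HB) in H; exact H.
Qed.

Lemma le_add_around : 0 <= 1 -> forall a x y, a <= x + (a + y).
Proof.
  intros Hpos a x y; apply (obH_le_trans HB) with (0 + (a + 0)).
  - rewrite (obH_add0 HB), ob_addr0; apply (obH_le_refl HB).
  - apply ob_le_add; [|apply ob_le_addl]; apply totally_positive_ge0, Hpos.
Qed.

Lemma sumlist_app l m : sumlist B (l ++ m) = sumlist B l + sumlist B m.
Proof.
  induction l as [|a l IH]; simpl.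
  - rewrite (obH_add0 HB); reflexivity.
  - rewrite IH, (obH_addA HB); reflexivity.
Qed.

Lemma sumlist_perm l m : Permutation l m -> sumlist B l = sumlist B m.
Proof.
  induction 1; simpl; try congruence.
  rewrite !(obH_addA HB), (obH_addC HB x y); reflexivity.
Qed.

Lemma sumlist_mull (A : Type) (F : A -> ob_car B) a l :
  sumlist B (map (fun b => a * F b) l) = a * sumlist B (map F l).
Proof.
  induction l as [|b l IH]; simpl.
  - rewrite ob_mulr0; reflexivity.
  - rewrite IH, (obH_distr HB); reflexivity.
Qed.

Lemma sumlist_lmul (M : Mon) (F : m_car M -> ob_car B)
  (Fmul : forall a b, F (m_mul M a b) = F a * F b) l m :
  sumlist B (map F (lmul M l m)) = sumlist B (map F l) * sumlist B (map F m).
Proof.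
  induction l as [|a l IH]; simpl.
  - rewrite (obH_mul0 HB); reflexivity.
  - rewrite map_app, sumlist_app, IH, ob_mulDl, map_map; f_equal.
    rewrite <- sumlist_mull; f_equal; apply map_ext; auto.
Qed.

End OBTheory.

Lemma genle_sound (M : Mon) (S : OB) (HS : is_OB S)
  (R : list (m_car M) -> list (m_car M) -> Prop) (F : m_car M -> ob_car S)
  (Fmul : forall a b, F (m_mul M a b) = ob_mul S (F a) (F b))
  (Fzero : F (m_zero M) = ob_zero S)
  (FR : forall l l', R l l' -> ob_le S (sumlist S (map F l)) (sumlist S (map F l'))) :
  forall l l', genle R l l' -> ob_le S (sumlist S (map F l)) (sumlist S (map F l')).
Proof.
  induction 1; simpl.
  - auto.
  - rewrite Fzero, (obH_add0 HS); apply (obH_le_refl HS).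
  - rewrite Fzero, (obH_add0 HS); apply (obH_le_refl HS).
  - apply (ob_le_eq HS), (sumlist_perm HS), Permutation_map, H.
  - eapply (obH_le_trans HS); eauto.
  - rewrite !map_app, !(sumlist_app HS); apply (obH_le_add HS); auto.
  - rewrite !(sumlist_lmul HS _ F Fmul); apply (obH_le_mul HS); auto.
Qed.

Section Presentation.
Variables (M : Mon) (R : list (m_car M) -> list (m_car M) -> Prop).
Hypothesis mulC : forall a b, m_mul M a b = m_mul M b a.
Hypothesis mulA : forall a b c, m_mul M a (m_mul M b c) = m_mul M (m_mul M a b) c.
Hypothesis mul1 : forall a, m_mul M (m_one M) a = a.

Lemma gequiv_refl l : gequiv R l l.
Proof. split; apply gl_perm, Permutation_refl. Qed.

Lemma gequiv_sym l l' : gequiv R l l' -> gequiv R l' l.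
Proof. intros [? ?]; split; assumption. Qed.

Lemma gequiv_trans l l' l'' : gequiv R l l' -> gequiv R l' l'' -> gequiv R l l''.
Proof. intros [? ?] [? ?]; split; eapply gl_trans; eassumption. Qed.

Lemma cls_eq l l' : gequiv R l l' -> cls R l = cls R l'.
Proof.
  intro H; apply sig_eq; simpl.
  extensionality m; apply propositional_extensionality; split; intro H'.
  - exact (gequiv_trans (gequiv_sym H) H').
  - exact (gequiv_trans H H').
Qed.

Lemma cls_inj l l' : cls R l = cls R l' -> gequiv R l l'.
Proof.
  intro H; apply (f_equal (@proj1_sig _ _)) in H; simpl in H.
  rewrite H; apply gequiv_refl.
Qed.

Lemma cls_rep (x : qcar R) : cls R (rep x) = x.
Proof.
  destruct x as [P HP]; unfold rep; simpl.
  destruct (constructive_indefinite_description _ HP) as [l Hl].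
  apply sig_eq; symmetry; exact Hl.
Qed.

Lemma rep_cls l : gequiv R (rep (cls R l)) l.
Proof. apply cls_inj, cls_rep. Qed.

Lemma cls_surj (x : qcar R) : exists l, x = cls R l.
Proof. exists (rep x); symmetry; apply cls_rep. Qed.

Lemma lmul_cons a l m : lmul M (a :: l) m = map (m_mul M a) m ++ lmul M l m.
Proof. reflexivity. Qed.

Lemma lmul_nil_r l : lmul M l [] = [].
Proof. induction l; simpl; auto. Qed.

Lemma lmul_app_l l1 l2 m : lmul M (l1 ++ l2) m = lmul M l1 m ++ lmul M l2 m.
Proof. apply flat_map_app. Qed.

Lemma lmul_cons_r l b m :
  Permutation (lmul M l (b :: m)) (map (fun a => m_mul M a b) l ++ lmul M l m).
Proof.
  induction l as [|a l IH]; simpl; auto.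
  apply perm_skip; rewrite IH; apply Permutation_app_swap_app.
Qed.

Lemma lmul_comm l m : Permutation (lmul M l m) (lmul M m l).
Proof.
  revert m; induction l as [|a l IH]; intro m; simpl.
  - rewrite lmul_nil_r; auto.
  - rewrite lmul_cons_r, IH; apply Permutation_app_tail.
    erewrite map_ext; [apply Permutation_refl|]; auto.
Qed.

Lemma lmul_app_r l m1 m2 :
  Permutation (lmul M l (m1 ++ m2)) (lmul M l m1 ++ lmul M l m2).
Proof. rewrite lmul_comm, lmul_app_l; apply Permutation_app; apply lmul_comm. Qed.

Lemma lmul_map_l a l m : lmul M (map (m_mul M a) l) m = map (m_mul M a) (lmul M l m).
Proof.
  induction l as [|b l IH]; simpl; auto.
  rewrite IH, map_app, map_map; f_equal; apply map_ext; auto.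
Qed.

Lemma lmul_assoc l m n : lmul M (lmul M l m) n = lmul M l (lmul M m n).
Proof.
  induction l as [|a l IH]; simpl; auto.
  rewrite lmul_app_l, IH; f_equal; apply lmul_map_l.
Qed.

Lemma lmul_1l m : lmul M [m_one M] m = m.
Proof. simpl; rewrite app_nil_r; erewrite map_ext; [apply map_id|]; auto. Qed.

Lemma genle_app_l l l' m : genle R l l' -> genle R (m ++ l) (m ++ l').
Proof.
  intro H; eapply gl_trans; [apply gl_perm, Permutation_app_comm|].
  eapply gl_trans; [apply gl_add, H|apply gl_perm, Permutation_app_comm].
Qed.

Lemma genle_app a a' b b' : genle R a a' -> genle R b b' -> genle R (a ++ b) (a' ++ b').
Proof. intros; eapply gl_trans; [apply gl_add|apply genle_app_l]; eassumption. Qed.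

Lemma genle_mul_l l l' m : genle R l l' -> genle R (lmul M m l) (lmul M m l').
Proof.
  intro H; eapply gl_trans; [apply gl_perm, lmul_comm|].
  eapply gl_trans; [apply gl_mul, H|apply gl_perm, lmul_comm].
Qed.

Lemma genle_mul a a' b b' :
  genle R a a' -> genle R b b' -> genle R (lmul M a b) (lmul M a' b').
Proof. intros; eapply gl_trans; [apply gl_mul|apply genle_mul_l]; eassumption. Qed.

Lemma pres_add l m : ob_add (pres R) (cls R l) (cls R m) = cls R (l ++ m).
Proof.
  destruct (rep_cls l), (rep_cls m); apply cls_eq; split; apply genle_app; assumption.
Qed.

Lemma pres_mul l m : ob_mul (pres R) (cls R l) (cls R m) = cls R (lmul M l m).
Proof.
  destruct (rep_cls l), (rep_cls m); apply cls_eq; split; apply genle_mul; assumption.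
Qed.

Lemma pres_le l m : ob_le (pres R) (cls R l) (cls R m) <-> genle R l m.
Proof.
  simpl; destruct (rep_cls l) as [Hl Hl'], (rep_cls m) as [Hm Hm'].
  split; intro H; eapply gl_trans; eauto; eapply gl_trans; eauto.
Qed.

Lemma pres_sum l : sumlist (pres R) (map (fun a => cls R [a]) l) = cls R l.
Proof.
  induction l as [|a l IH]; [reflexivity|].
  rewrite map_cons, sumlist_cons, IH, pres_add; reflexivity.
Qed.

Lemma additive_cls_sum (S : OB) (h : ob_car (pres R) -> ob_car S)
  (h0 : h (cls R []) = ob_zero S)
  (hD : forall x y, h (ob_add (pres R) x y) = ob_add S (h x) (h y)) l :
  h (cls R l) = sumlist S (map (fun a => h (cls R [a])) l).
Proof.
  induction l as [|a l IH]; [exact h0|].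
  rewrite map_cons, sumlist_cons, <- IH, <- hD, pres_add; reflexivity.
Qed.

Lemma pres_is_OB : is_OB (pres R).
Proof.
  constructor.
  - intros x y z; destruct (cls_surj x) as [a ->], (cls_surj y) as [b ->],
      (cls_surj z) as [c ->]; rewrite !pres_add, app_assoc; reflexivity.
  - intros x y; destruct (cls_surj x) as [a ->], (cls_surj y) as [b ->].
    rewrite !pres_add; apply cls_eq; split; apply gl_perm, Permutation_app_comm.
  - intros x; destruct (cls_surj x) as [a ->]; exact (pres_add [] a).
  - intros x y z; destruct (cls_surj x) as [a ->], (cls_surj y) as [b ->],
      (cls_surj z) as [c ->]; rewrite !pres_mul, lmul_assoc; reflexivity.
  - intros x y; destruct (cls_surj x) as [a ->], (cls_surj y) as [b ->].
    rewrite !pres_mul; apply cls_eq; split; apply gl_perm, lmul_comm.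
  - intros x; destruct (cls_surj x) as [a ->].
    change (ob_one (pres R)) with (cls R [m_one M]); rewrite pres_mul, lmul_1l; reflexivity.
  - intros x; destruct (cls_surj x) as [a ->]; exact (pres_mul [] a).
  - intros x y z; destruct (cls_surj x) as [a ->], (cls_surj y) as [b ->],
      (cls_surj z) as [c ->]; rewrite !pres_add, !pres_mul, pres_add.
    apply cls_eq; split; apply gl_perm; [|symmetry]; apply lmul_app_r.
  - intros x; destruct (cls_surj x) as [a ->]; apply pres_le, gl_perm; reflexivity.
  - intros x y z; destruct (cls_surj x) as [a ->], (cls_surj y) as [b ->],
      (cls_surj z) as [c ->]; rewrite !pres_le; apply gl_trans.
  - intros x y; destruct (cls_surj x) as [a ->], (cls_surj y) as [b ->].
    rewrite !pres_le; intros; apply cls_eq; split; assumption.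
  - intros x y z; destruct (cls_surj x) as [a ->], (cls_surj y) as [b ->],
      (cls_surj z) as [c ->]; rewrite !pres_add, !pres_le; apply gl_add.
  - intros x y z; destruct (cls_surj x) as [a ->], (cls_surj y) as [b ->],
      (cls_surj z) as [c ->]; rewrite !pres_mul, !pres_le; apply gl_mul.
  - exists (m_zero M); apply cls_eq; split; [apply gl_zero2|apply gl_zero1].
  - exists (m_one M); reflexivity.
  - intros x y [a ->] [b ->]; exists (m_mul M a b); apply pres_mul.
  - intros x; destruct (cls_surj x) as [l ->].
    exists (map (fun a => exist (ob_mono (pres R)) (cls R [a]) (ex_intro _ a eq_refl)) l).
    rewrite map_map; symmetry; apply pres_sum.
Qed.

End Presentation.

Section UnderlyingMonoid.
Variables (B : OB) (HB : is_OB B).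

Lemma obmon_mulC a b : m_mul (obmon HB) a b = m_mul (obmon HB) b a.
Proof. apply sig_eq, (obH_mulC HB). Qed.

Lemma obmon_mulA a b c :
  m_mul (obmon HB) a (m_mul (obmon HB) b c) = m_mul (obmon HB) (m_mul (obmon HB) a b) c.
Proof. apply sig_eq, (obH_mulA HB). Qed.

Lemma obmon_mul1 a : m_mul (obmon HB) (m_one (obmon HB)) a = a.
Proof. apply sig_eq, (obH_mul1 HB). Qed.

End UnderlyingMonoid.

Section ProductMonoid.
Variables (M N : Mon).

Lemma prodmon_mulC :
  (forall a b, m_mul M a b = m_mul M b a) -> (forall a b, m_mul N a b = m_mul N b a) ->
  forall a b, m_mul (prodmon M N) a b = m_mul (prodmon M N) b a.
Proof. intros HM HN [] []; simpl; f_equal; auto. Qed.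

Lemma prodmon_mulA :
  (forall a b c, m_mul M a (m_mul M b c) = m_mul M (m_mul M a b) c) ->
  (forall a b c, m_mul N a (m_mul N b c) = m_mul N (m_mul N a b) c) ->
  forall a b c, m_mul (prodmon M N) a (m_mul (prodmon M N) b c) =
                m_mul (prodmon M N) (m_mul (prodmon M N) a b) c.
Proof. intros HM HN [] [] []; simpl; f_equal; auto. Qed.

Lemma prodmon_mul1 :
  (forall a, m_mul M (m_one M) a = a) -> (forall a, m_mul N (m_one N) a = a) ->
  forall a, m_mul (prodmon M N) (m_one (prodmon M N)) a = a.
Proof. intros HM HN []; simpl; f_equal; auto. Qed.

End ProductMonoid.

Definition mval (B S : OB) (w : msort B -> msort S) (b : msort B) : ob_car S :=
  proj1_sig (w b).

Definition monomial_monotone (B S : OB) (w : msort B -> msort S) : Prop :=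
  forall a l, ob_le B (proj1_sig a) (sumlist B (map (@proj1_sig _ _) l)) ->
    ob_le S (mval w a) (sumlist S (map (mval w) l)).

Section Valuation.
Variables (B S : OB) (HB : is_OB B) (HS : is_OB S) (w : msort B -> msort S).

Lemma is_multP : is_mult w <->
  mval w (m_zero (obmon HB)) = ob_zero S /\ mval w (m_one (obmon HB)) = ob_one S /\
  forall a b, mval w (m_mul (obmon HB) a b) = ob_mul S (mval w a) (mval w b).
Proof.
  split.
  - intros (H0 & H1 & HM); split; [|split]; [apply H0|apply H1|].
    intros [a Ha] [b Hb]; apply HM.
  - intros (H0 & H1 & HM); split; [|split].
    + intro Hz; replace (exist _ _ Hz) with (m_zero (obmon HB))
        by (apply sig_eq; reflexivity); exact H0.
    + intro Ho; replace (exist _ _ Ho) with (m_one (obmon HB))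
        by (apply sig_eq; reflexivity); exact H1.
    + intros x y Hx Hy Hxy.
      replace (exist _ _ Hxy) with (m_mul (obmon HB) (exist _ x Hx) (exist _ y Hy))
        by (apply sig_eq; reflexivity).
      apply HM.
Qed.

Lemma genle_Rmon_sound : is_mult w -> monomial_monotone w ->
  forall l l', genle (Rmon HB) l l' ->
    ob_le S (sumlist S (map (mval w) l)) (sumlist S (map (mval w) l')).
Proof.
  intros (H0 & _ & HM)%is_multP Hw.
  apply (@genle_sound (obmon HB) S HS); auto.
  intros ? l' [a [-> Ha]]; simpl; rewrite (ob_addr0 HS); auto.
Qed.

Lemma Bpos_cls_eq (L L' : list (msort S)) :
  sumlist S (map (@proj1_sig _ _) L) = sumlist S (map (@proj1_sig _ _) L') ->
  cls (Rpos HS) L = cls (Rpos HS) L'.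
Proof.
  intro E; apply cls_eq; split; apply gl_rel; left; rewrite E; apply (obH_le_refl HS).
Qed.

Lemma map_mval l : map (@proj1_sig _ _) (map w l) = map (mval w) l.
Proof. apply map_map. Qed.

Lemma pres_map_cls : is_mult w -> monomial_monotone w -> forall l,
  @pres_map (obmon HB) (obmon HS) (Rmon HB) (Rpos HS) w (cls (Rmon HB) l) =
  cls (Rpos HS) (map w l).
Proof.
  intros Hm Hw l; unfold pres_map; destruct (rep_cls _ (Rmon HB) l) as [H1 H2].
  apply cls_eq; split; apply gl_rel; left; rewrite !map_mval;
    apply genle_Rmon_sound; assumption.
Qed.

Lemma is_valuation_of : is_mult w -> monomial_monotone w -> is_valuation HB HS w.
Proof.
  intros Hm Hw; split; [exact Hm|].
  pose proof Hm as (H0 & H1 & HM)%is_multP.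
  assert (Hcls := pres_map_cls Hm Hw).
  pose proof (@obmon_mulC _ HB) as HmulB; pose proof (@obmon_mulC _ HS) as HmulS.
  unfold Bmon, Bpos; constructor.
  - apply Hcls.
  - change (ob_one (pres (Rmon HB))) with (cls (Rmon HB) [m_one (obmon HB)]).
    rewrite Hcls; apply Bpos_cls_eq; simpl; rewrite <- H1; reflexivity.
  - intros x y; destruct (cls_surj x) as [a ->], (cls_surj y) as [b ->].
    rewrite pres_add, !Hcls, map_app, pres_add; reflexivity.
  - intros x y; destruct (cls_surj x) as [a ->], (cls_surj y) as [b ->].
    rewrite pres_mul, !Hcls, pres_mul by assumption; apply Bpos_cls_eq.
    rewrite map_mval, (sumlist_lmul HS _ _ HM),
      (sumlist_lmul HS (obmon HS) (@proj1_sig _ _)), !map_mval by reflexivity.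
    reflexivity.
  - intros x y; destruct (cls_surj x) as [a ->], (cls_surj y) as [b ->].
    rewrite !Hcls, !pres_le; intro H; apply gl_rel; left.
    rewrite !map_mval; apply genle_Rmon_sound; assumption.
  - intros x [a ->]; rewrite Hcls; exists (w a); reflexivity.
Qed.

End Valuation.

Section MonomialClasses.
Variables (B : OB) (HB : is_OB B).

Definition nonpos (c : msort B) : Prop := ob_le B (proj1_sig c) (ob_zero B).

Definition nonpos_but_one (y : ob_car B) (l : list (msort B)) : Prop :=
  (Forall nonpos l /\ ob_le B (ob_zero B) y) \/
  exists l1 c l2, l = l1 ++ c :: l2 /\ ob_le B (proj1_sig c) y /\
    Forall nonpos l1 /\ Forall nonpos l2.

Definition scalem (b : msort B) (l : list (msort B)) : list (msort B) :=
  map (fun a => m_mul (obmon HB) a b) l.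

Lemma nonpos_but_one_0 l : nonpos_but_one (ob_zero B) l <-> Forall nonpos l.
Proof.
  split.
  - intros [[H _]|(l1 & c & l2 & -> & Hc & H1 & H2)]; [exact H|].
    apply Forall_app; split; [exact H1|constructor; assumption].
  - intro H; left; split; [exact H|apply (obH_le_refl HB)].
Qed.

Lemma nonpos_but_one_app y l1 l2 : nonpos_but_one y (l1 ++ l2) <->
  (nonpos_but_one y l1 /\ Forall nonpos l2) \/ (Forall nonpos l1 /\ nonpos_but_one y l2).
Proof.
  split.
  - intros [[H Hy]|(m1 & c & m2 & E & Hc & H1 & H2)].
    + apply Forall_app in H as [H1 H2]; left; split; [left; split|]; assumption.
    + destruct (app_eq_app _ _ _ _ E) as [m [[-> E']|[-> E']]].
      * destruct m as [|d m]; simpl in E'.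
        -- subst l2; right; rewrite app_nil_r; split; [assumption|].
           right; exists [], c, m2; auto.
        -- injection E' as -> ->; apply Forall_app in H2 as [H2 H2'].
           left; split; [right; exists m1, d, m|]; auto.
      * subst l2; apply Forall_app in H1 as [H1 H1'].
        right; split; [|right; exists m, c, m2]; auto.
  - intros [[[[H Hy]|(m1 & c & m2 & -> & Hc & H1 & H2)] H3]
           |[H3 [[H Hy]|(m1 & c & m2 & -> & Hc & H1 & H2)]]].
    + left; split; [apply Forall_app|]; auto.
    + right; exists m1, c, (m2 ++ l2); rewrite <- app_assoc.
      repeat split; try apply Forall_app; auto.
    + left; split; [apply Forall_app|]; auto.
    + right; exists (l1 ++ m1), c, m2; rewrite <- app_assoc.
      repeat split; try apply Forall_app; auto.
Qed.

Lemma nonpos_but_one_perm y l l' :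
  Permutation l l' -> nonpos_but_one y l -> nonpos_but_one y l'.
Proof.
  intros Hp [[H Hy]|(l1 & c & l2 & -> & Hc & H1 & H2)].
  - left; split; [apply (Permutation_Forall Hp H)|exact Hy].
  - assert (Hin : In c l') by (eapply Permutation_in; [exact Hp|apply in_elt]).
    destruct (in_split _ _ Hin) as [l1' [l2' ->]].
    apply Permutation_app_inv in Hp.
    assert (Hf : Forall nonpos (l1' ++ l2'))
      by (apply (Permutation_Forall Hp), Forall_app; auto).
    apply Forall_app in Hf as [Hf1 Hf2]; right; exists l1', c, l2'; auto.
Qed.

Lemma sumlist_nonpos l :
  Forall nonpos l -> ob_le B (sumlist B (map (@proj1_sig _ _) l)) (ob_zero B).
Proof.
  induction 1 as [|c l Hc _ IH]; simpl; [apply (obH_le_refl HB)|].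
  rewrite <- (obH_add0 HB (ob_zero B)); apply (ob_le_add HB); assumption.
Qed.

Lemma sumlist_nonpos_around l1 c l2 : Forall nonpos l1 -> Forall nonpos l2 ->
  ob_le B (sumlist B (map (@proj1_sig _ _) (l1 ++ c :: l2))) (proj1_sig c).
Proof.
  intros H1 H2; rewrite map_app, (sumlist_app HB), map_cons, sumlist_cons.
  rewrite <- (obH_add0 HB (proj1_sig c)) at 2; rewrite <- (ob_addr0 HB (proj1_sig c)) at 2.
  apply (ob_le_add HB), (ob_le_addl HB); apply sumlist_nonpos; assumption.
Qed.

Lemma nonpos_but_one_sum y l :
  nonpos_but_one y l -> ob_le B (sumlist B (map (@proj1_sig _ _) l)) y.
Proof.
  intros [[H Hy]|(l1 & c & l2 & -> & Hc & H1 & H2)]; eapply (obH_le_trans HB).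
  - apply sumlist_nonpos, H.
  - exact Hy.
  - apply sumlist_nonpos_around; assumption.
  - exact Hc.
Qed.

Lemma sumlist_scalem b l : sumlist B (map (@proj1_sig _ _) (scalem b l)) =
  ob_mul B (sumlist B (map (@proj1_sig _ _) l)) (proj1_sig b).
Proof.
  induction l as [|a l IH]; simpl.
  - rewrite (obH_mul0 HB); reflexivity.
  - rewrite IH, (ob_mulDl HB); reflexivity.
Qed.

Lemma scalem_1 l : scalem (m_one (obmon HB)) l = l.
Proof.
  unfold scalem; erewrite map_ext; [apply map_id|].
  intro a; rewrite obmon_mulC; apply obmon_mul1.
Qed.

Lemma scalem_lmul b l m : Permutation (scalem b (lmul (obmon HB) l m))
  (flat_map (fun c => scalem (m_mul (obmon HB) c b) l) m).
Proof.
  assert (E : scalem b (lmul (obmon HB) l m) = lmul (obmon HB) l (scalem b m)).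
  { induction l as [|a l IH]; [reflexivity|].
    unfold scalem in *; rewrite !lmul_cons, map_app, IH, !map_map; f_equal.
    apply map_ext; intro c; symmetry; apply obmon_mulA. }
  rewrite E, (lmul_comm _ (@obmon_mulC _ HB)).
  unfold lmul, scalem; rewrite flat_map_concat_map, map_map, <- flat_map_concat_map.
  apply Permutation_refl'; apply flat_map_ext; intro c; apply map_ext; intro a.
  apply obmon_mulC.
Qed.

Definition nonpos_but_one_reflected (l l' : list (msort B)) : Prop :=
  forall y b, nonpos_but_one y (scalem b l') -> nonpos_but_one y (scalem b l).

Lemma nonpos_but_one_reflected_lmul l l' m : nonpos_but_one_reflected l l' ->
  nonpos_but_one_reflected (lmul (obmon HB) l m) (lmul (obmon HB) l' m).
Proof.
  intros H y b HD.
  apply (nonpos_but_one_perm (scalem_lmul b l' m)) in HD.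
  eapply nonpos_but_one_perm; [symmetry; apply scalem_lmul|].
  revert y HD; induction m as [|c m IH]; intros y HD; simpl in *; [exact HD|].
  apply nonpos_but_one_app in HD as [[H1 H2]|[H1 H2]]; apply nonpos_but_one_app.
  - left; split; [apply H, H1|apply nonpos_but_one_0, IH, nonpos_but_one_0, H2].
  - right; split; [apply nonpos_but_one_0, H, nonpos_but_one_0, H1|apply IH, H2].
Qed.

(* Quantifying over the scaling monomial [b] is what makes the multiplicative
   closure step of [genle] go through. *)
Lemma genle_Rmon_reflected l l' :
  genle (Rmon HB) l l' -> nonpos_but_one_reflected l l'.
Proof.
  induction 1 as [l l' [a [-> Ha]]| | |l l' Hp| |l l' m _ IH|l l' m _ IH];
    intros y b HD.
  - right; exists [], (m_mul (obmon HB) a b), []; repeat split; try constructor.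
    eapply (obH_le_trans HB); [|apply nonpos_but_one_sum, HD].
    rewrite sumlist_scalem; apply (obH_le_mul HB), Ha.
  - destruct HD as [[_ Hy]|([|] & ? & ? & ? & _)]; try discriminate.
    right; exists [], (m_mul (obmon HB) (m_zero (obmon HB)) b), [].
    repeat split; try constructor; simpl; rewrite (obH_mul0 HB); exact Hy.
  - apply nonpos_but_one_sum in HD; simpl in HD.
    rewrite (ob_addr0 HB), (obH_mul0 HB) in HD.
    left; split; [constructor|exact HD].
  - eapply nonpos_but_one_perm; [apply Permutation_map; symmetry; exact Hp|exact HD].
  - auto.
  - unfold scalem in *; rewrite map_app in *.
    apply nonpos_but_one_app in HD as [[H1 H2]|[H1 H2]]; apply nonpos_but_one_app.
    + left; split; [apply IH, H1|exact H2].
    + right; split; [apply nonpos_but_one_0, IH, nonpos_but_one_0, H1|exact H2].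
  - apply (nonpos_but_one_reflected_lmul m IH), HD.
Qed.

Lemma genle_Rmon_singleton l x :
  genle (Rmon HB) l [x] -> nonpos_but_one (proj1_sig x) l.
Proof.
  intro H; rewrite <- (scalem_1 l); apply (genle_Rmon_reflected H).
  right; exists [], (m_mul (obmon HB) x (m_one (obmon HB))), [].
  repeat split; try constructor; simpl; rewrite (ob_mulr1 HB); apply (obH_le_refl HB).
Qed.

Lemma Rmon_sound l l' : genle (Rmon HB) l l' ->
  ob_le B (sumlist B (map (@proj1_sig _ _) l)) (sumlist B (map (@proj1_sig _ _) l')).
Proof.
  apply (@genle_Rmon_sound B B HB HB (fun x => x)); [|intros ? ? H; exact H].
  split; [|split]; reflexivity.
Qed.

Lemma Rmon_monomial_class l x : gequiv (Rmon HB) l [x] ->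
  (exists l1 l2, l = l1 ++ x :: l2 /\ Forall nonpos l1 /\ Forall nonpos l2) \/
  (proj1_sig x = ob_zero B /\ Forall nonpos l).
Proof.
  intros [Hle Hge]; apply Rmon_sound in Hge; simpl in Hge.
  rewrite (ob_addr0 HB) in Hge.
  destruct (genle_Rmon_singleton Hle) as [[Hl Hx]|(l1 & c & l2 & -> & Hc & H1 & H2)].
  - right; split; [|exact Hl]; apply (obH_le_antisym HB); [|exact Hx].
    eapply (obH_le_trans HB); [exact Hge|apply sumlist_nonpos, Hl].
  - left; exists l1, l2; replace x with c; [auto|].
    apply sig_eq, (obH_le_antisym HB); [exact Hc|].
    eapply (obH_le_trans HB); [exact Hge|apply sumlist_nonpos_around; assumption].
Qed.

End MonomialClasses.

Section PositiveValuation.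
Variables (B S : OB) (HB : is_OB B) (HS : is_OB S) (Spos : totally_positive S)
  (w : msort B -> msort S) (Hw : is_valuation HB HS w).

Definition pos_eval (q : ob_car (Bpos HS)) : ob_car S :=
  sumlist S (map (@proj1_sig _ _) (rep q)).

Lemma Rpos_sound L L' : genle (Rpos HS) L L' -> ob_le S
  (sumlist S (map (@proj1_sig _ _) L)) (sumlist S (map (@proj1_sig _ _) L')).
Proof.
  apply (@genle_sound (obmon HS) S HS); auto.
  intros ? ? [H|[-> ->]]; [exact H|]; simpl; rewrite (ob_addr0 HS); exact Spos.
Qed.

Lemma pos_eval_cls L : pos_eval (cls (Rpos HS) L) = sumlist S (map (@proj1_sig _ _) L).
Proof.
  unfold pos_eval; destruct (rep_cls _ (Rpos HS) L) as [H1 H2].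
  apply (obH_le_antisym HS); apply Rpos_sound; assumption.
Qed.

Lemma pos_eval_add x y : pos_eval (ob_add (Bpos HS) x y) = ob_add S (pos_eval x) (pos_eval y).
Proof.
  destruct (cls_surj x) as [a ->], (cls_surj y) as [b ->]; unfold Bpos.
  rewrite pres_add, !pos_eval_cls, map_app; apply (sumlist_app HS).
Qed.

Lemma pos_eval_le x y : ob_le (Bpos HS) x y -> ob_le S (pos_eval x) (pos_eval y).
Proof.
  destruct (cls_surj x) as [a ->], (cls_surj y) as [b ->]; unfold Bpos.
  rewrite pres_le, !pos_eval_cls; apply Rpos_sound.
Qed.

Local Notation w_mon := (@pres_map (obmon HB) (obmon HS) (Rmon HB) (Rpos HS) w).

(* A priori [w_mon] sends the class of [x] to the sum of [w] over an arbitrary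
   representative of that class, so [wsum x] need not be [w x]. *)
Definition wsum (x : msort B) : ob_car S := pos_eval (w_mon (cls (Rmon HB) [x])).

Lemma pos_eval_w_mon l : pos_eval (w_mon (cls (Rmon HB) l)) = sumlist S (map wsum l).
Proof.
  destruct Hw as [_ Hmor].
  apply (additive_cls_sum S (fun z => pos_eval (w_mon z))).
  - change (cls (Rmon HB) []) with (ob_zero (Bmon HB)); rewrite (mor_zero Hmor).
    apply pos_eval_cls.
  - intros x y; rewrite (mor_add Hmor); apply pos_eval_add.
Qed.

Lemma wsum_monotone a l : ob_le B (proj1_sig a) (sumlist B (map (@proj1_sig _ _) l)) ->
  ob_le S (wsum a) (sumlist S (map wsum l)).
Proof.
  intro H; rewrite <- pos_eval_w_mon; apply pos_eval_le, (mor_le (proj2 Hw)).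
  apply pres_le, gl_rel; exists a; split; [reflexivity|exact H].
Qed.

Lemma wsum_rep x : wsum x = sumlist S (map (mval w) (rep (cls (Rmon HB) [x]))).
Proof. unfold wsum, pres_map; rewrite pos_eval_cls, map_map; reflexivity. Qed.

Lemma mval_nonpos e : nonpos e -> mval w e = ob_zero S.
Proof.
  intro He; apply (obH_le_antisym HS); [|apply (totally_positive_ge0 HS Spos)].
  assert (Hz : wsum e = ob_zero S).
  { apply (obH_le_antisym HS); [exact (wsum_monotone e [] He)|].
    apply (totally_positive_ge0 HS Spos). }
  destruct (Rmon_monomial_class (rep_cls (obmon HB) (Rmon HB) [e])) as [(l1 & l2 & E & _)|[E _]].
  - rewrite <- Hz, wsum_rep, E, map_app, (sumlist_app HS), map_cons, sumlist_cons.
    apply (le_add_around HS Spos).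
  - replace e with (m_zero (obmon HB)) by (apply sig_eq; symmetry; exact E).
    destruct Hw as [[H0 _] _]; rewrite <- (H0 (obH_mono0 HB)).
    apply (obH_le_refl HS).
Qed.

Lemma sumlist_mval_nonpos l : Forall (@nonpos B) l -> sumlist S (map (mval w) l) = ob_zero S.
Proof.
  induction 1 as [|e l He _ IH]; [reflexivity|].
  rewrite map_cons, sumlist_cons, mval_nonpos, IH by assumption; apply (obH_add0 HS).
Qed.

Lemma wsum_mval x : wsum x = mval w x.
Proof.
  rewrite wsum_rep.
  destruct (Rmon_monomial_class (rep_cls (obmon HB) (Rmon HB) [x])) as [(l1 & l2 & -> & H1 & H2)|[E H]].
  - rewrite map_app, (sumlist_app HS), map_cons, sumlist_cons, !sumlist_mval_nonpos,
      (obH_add0 HS), (ob_addr0 HS) by assumption; reflexivity.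
  - rewrite sumlist_mval_nonpos by assumption; symmetry; apply mval_nonpos.
    unfold nonpos; rewrite E; apply (obH_le_refl HB).
Qed.

Lemma valuation_monomial_monotone : monomial_monotone w.
Proof.
  intros a l H; pose proof (wsum_monotone a l H) as H'.
  rewrite wsum_mval in H'; erewrite map_ext in H'; [exact H'|apply wsum_mval].
Qed.

End PositiveValuation.

Lemma totally_positive_mor (T S : OB) (sigma : ob_car T -> ob_car S) :
  is_mor T S sigma -> totally_positive T -> totally_positive S.
Proof.
  intros Hsig Tpos; unfold totally_positive.
  rewrite <- (mor_zero Hsig), <- (mor_one Hsig); apply (mor_le Hsig), Tpos.
Qed.

Section Tropicalization.
Variables (k B T : OB) (Hk : is_OB k) (HB : is_OB B) (HT : is_OB T)
  (phi : ob_car k -> ob_car B) (Hphi : is_mor k B phi) (v : msort k -> msort T).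

Local Notation tmon := (prodmon (obmon HB) (obmon HT)).
Local Notation trel := (@Rtens (obmon Hk) (obmon HB) (obmon HT) (Bmon HB) T
  (fun b => @cls (obmon HB) (Rmon HB) [b]) (@proj1_sig _ _) (phim Hphi) v).

Definition tensB (b : msort B) : m_car tmon := (b, m_one (obmon HT)).
Definition tensT (t : msort T) : m_car tmon := (m_one (obmon HB), t).

Lemma tmon_mulC a b : m_mul tmon a b = m_mul tmon b a.
Proof. apply prodmon_mulC; apply obmon_mulC. Qed.

Lemma tropB_is_OB : is_OB (tropB Hk HB HT Hphi v).
Proof.
  apply pres_is_OB; [exact tmon_mulC|apply prodmon_mulA|apply prodmon_mul1];
    (apply obmon_mulA || apply obmon_mul1).
Qed.

Lemma tropT_cls (l : list (msort T)) t : sumlist T (map (@proj1_sig _ _) l) = t ->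
  tropT Hk HB HT Hphi v t = cls trel (map tensT l).
Proof.
  intro E; unfold tropT.
  destruct (constructive_indefinite_description _ _) as [l0 E0]; simpl.
  apply cls_eq; split; apply gl_rel; right; right; right.
  - exists l0, l; repeat split; apply (ob_le_eq HT); exact (eq_trans (eq_sym E0) (eq_sym E)).
  - exists l, l0; repeat split; apply (ob_le_eq HT); exact (eq_trans E E0).
Qed.

Lemma lmul_tensT lx ly :
  lmul tmon (map tensT lx) (map tensT ly) = map tensT (lmul (obmon HT) lx ly).
Proof.
  induction lx as [|a lx IH]; [reflexivity|].
  simpl map; rewrite !lmul_cons, map_app; f_equal; [|exact IH].
  rewrite !map_map; apply map_ext; intro b; unfold tensT; simpl; f_equal.
  apply sig_eq, (obH_mul1 HB).
Qed.

Lemma lmul_tensB a b : lmul tmon [tensB a] [tensB b] = [tensB (m_mul (obmon HB) a b)].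
Proof. simpl; unfold tensB; do 3 f_equal; apply sig_eq, (obH_mul1 HT). Qed.

Lemma lmul_tensB_tensT b t : lmul tmon [tensB b] [tensT t] = [(b, t)].
Proof.
  simpl; unfold tensB, tensT; do 2 f_equal; apply sig_eq.
  - apply (ob_mulr1 HB).
  - apply (obH_mul1 HT).
Qed.

Lemma cls_tens_zero : cls trel [tensB (m_zero (obmon HB))] = cls trel [].
Proof. apply cls_eq; split; apply gl_rel; [left|right; left]; left; auto. Qed.

Lemma cls_tens_balance a : cls trel [tensB (phim Hphi a)] = cls trel [tensT (v a)].
Proof.
  assert (Hrel : @Rtens_eq (obmon Hk) (obmon HB) (obmon HT) (phim Hphi) v
    [(m_mul (obmon HB) (m_one (obmon HB)) (phim Hphi a), m_one (obmon HT))]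
    [(m_one (obmon HB), m_mul (obmon HT) (v a) (m_one (obmon HT)))])
    by (right; right; exists a, (m_one (obmon HB)), (m_one (obmon HT)); auto).
  rewrite obmon_mul1, obmon_mulC, obmon_mul1 in Hrel.
  apply cls_eq; split; apply gl_rel; [left|right; left]; exact Hrel.
Qed.

Lemma tropT_is_mor : is_mor T (tropB Hk HB HT Hphi v) (tropT Hk HB HT Hphi v).
Proof.
  assert (Hcls : forall t, exists l, t = sumlist T (map (@proj1_sig _ _) l) /\
                   tropT Hk HB HT Hphi v t = cls trel (map tensT l))
    by (intro t; destruct (obH_gen HT t) as [l E]; exists l;
        split; [exact E|apply tropT_cls; symmetry; exact E]).
  change (is_mor T (pres trel) (tropT Hk HB HT Hphi v)); constructor.
  - apply (tropT_cls []); reflexivity.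
  - apply (tropT_cls [m_one (obmon HT)]), (ob_addr0 HT).
  - intros x y; destruct (Hcls x) as (lx & -> & ->), (Hcls y) as (ly & -> & ->).
    rewrite pres_add, <- map_app; apply tropT_cls.
    rewrite map_app; apply (sumlist_app HT).
  - intros x y; destruct (Hcls x) as (lx & -> & ->), (Hcls y) as (ly & -> & ->).
    rewrite pres_mul, lmul_tensT by exact tmon_mulC; apply tropT_cls.
    apply (sumlist_lmul HT (obmon HT) (@proj1_sig _ _)); reflexivity.
  - intros x y H; destruct (Hcls x) as (lx & -> & ->), (Hcls y) as (ly & -> & ->).
    apply pres_le, gl_rel; right; right; right; exists lx, ly; auto.
  - intros t Ht; exists (tensT (exist _ t Ht)).
    apply (tropT_cls [exist _ t Ht]), (ob_addr0 HT).
Qed.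

Section ValuationOfHom.
Variables (S : OB) (HS : is_OB S) (sigma : ob_car T -> ob_car S).
Variable h : HomT Hk HB HT Hphi v S sigma.

Lemma hom_is_mor : is_mor (pres trel) S (proj1_sig h).
Proof. exact (proj1 (proj2_sig h)). Qed.

Lemma hom_tropT t : proj1_sig h (tropT Hk HB HT Hphi v t) = sigma t.
Proof. exact (proj2 (proj2_sig h) t). Qed.

Definition val_of_hom (b : msort B) : msort S :=
  exist (ob_mono S) (proj1_sig h (cls trel [tensB b]))
    (mor_mono hom_is_mor _ (ex_intro _ (tensB b) eq_refl)).

Lemma hom_cls l : proj1_sig h (cls trel l) =
  sumlist S (map (fun a => proj1_sig h (cls trel [a])) l).
Proof. apply additive_cls_sum; [apply (mor_zero hom_is_mor)|apply (mor_add hom_is_mor)]. Qed.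

Lemma hom_cls_pair b t :
  proj1_sig h (cls trel [(b, t)]) = ob_mul S (mval val_of_hom b) (sigma (proj1_sig t)).
Proof.
  rewrite <- lmul_tensB_tensT, <- pres_mul by exact tmon_mulC.
  rewrite (mor_mul hom_is_mor), <- hom_tropT, (tropT_cls [t]) by apply (ob_addr0 HT).
  reflexivity.
Qed.

Lemma val_of_hom_mult : is_mult val_of_hom.
Proof.
  apply (is_multP HB); unfold mval, val_of_hom; cbn [proj1_sig]; split; [|split].
  - rewrite cls_tens_zero; apply (mor_zero hom_is_mor).
  - apply (mor_one hom_is_mor).
  - intros a b; rewrite <- (mor_mul hom_is_mor), pres_mul, lmul_tensB by exact tmon_mulC.
    reflexivity.
Qed.

Lemma val_of_hom_monotone : monomial_monotone val_of_hom.
Proof.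
  intros a l Ha; unfold mval, val_of_hom; simpl.
  rewrite <- (map_map tensB (fun p => proj1_sig h (cls trel [p]))), <- hom_cls.
  apply (mor_le hom_is_mor), pres_le, gl_rel; right; right; left.
  exists [a], l; repeat split; unfold Bmon; rewrite !pres_sum.
  apply pres_le, gl_rel; exists a; auto.
Qed.

Lemma val_of_hom_extends a :
  proj1_sig (val_of_hom (phim Hphi a)) = sigma (proj1_sig (v a)).
Proof.
  simpl; rewrite cls_tens_balance, <- hom_tropT.
  rewrite (tropT_cls [v a]) by apply (ob_addr0 HT); reflexivity.
Qed.

Definition valset_of_hom : ValSet HB Hphi v HS sigma :=
  exist _ val_of_hom
    (conj (is_valuation_of HB HS val_of_hom_mult val_of_hom_monotone) val_of_hom_extends).

End ValuationOfHom.

Lemma hom_ext (S : OB) (HS : is_OB S) (sigma : ob_car T -> ob_car S)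
  (h h' : HomT Hk HB HT Hphi v S sigma) :
  (forall b, mval (val_of_hom h) b = mval (val_of_hom h') b) -> h = h'.
Proof.
  intro H; apply sig_eq; extensionality x; destruct (cls_surj x) as [l ->].
  rewrite !hom_cls by exact HS; f_equal; apply map_ext.
  intros [b t]; rewrite !hom_cls_pair, H; reflexivity.
Qed.

Section HomOfValuation.
Variables (S : OB) (HS : is_OB S) (sigma : ob_car T -> ob_car S)
  (Hsig : is_mor T S sigma) (Spos : totally_positive S)
  (w : msort B -> msort S) (Hw : is_valuation HB HS w)
  (Hext : forall a, proj1_sig (w (phim Hphi a)) = sigma (proj1_sig (v a))).

Definition tens_eval (p : m_car tmon) : ob_car S :=
  ob_mul S (mval w (fst p)) (sigma (proj1_sig (snd p))).

Lemma tens_eval_mul p q : tens_eval (m_mul tmon p q) = ob_mul S (tens_eval p) (tens_eval q).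
Proof.
  destruct Hw as [(_ & _ & HM)%(is_multP HB) _].
  destruct p as [a s], q as [b t].
  change (tens_eval (m_mul tmon (a, s) (b, t))) with (ob_mul S
    (mval w (m_mul (obmon HB) a b)) (sigma (ob_mul T (proj1_sig s) (proj1_sig t)))).
  rewrite HM, (mor_mul Hsig); apply (ob_mulACA HS).
Qed.

Lemma mval_zero : mval w (m_zero (obmon HB)) = ob_zero S.
Proof. destruct Hw as [(H0 & _ & _)%(is_multP HB) _]; exact H0. Qed.

Lemma mval_one : mval w (m_one (obmon HB)) = ob_one S.
Proof. destruct Hw as [(_ & H1 & _)%(is_multP HB) _]; exact H1. Qed.

Lemma tens_eval_zero : tens_eval (m_zero tmon) = ob_zero S.
Proof. unfold tens_eval; cbn [fst m_zero prodmon]; rewrite mval_zero; apply (obH_mul0 HS). Qed.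

Lemma tens_eval_tensB lc :
  sumlist S (map tens_eval (map tensB lc)) = sumlist S (map (mval w) lc).
Proof.
  induction lc as [|c lc IH]; [reflexivity|]; rewrite !map_cons, !sumlist_cons, IH.
  unfold tens_eval; simpl; rewrite (mor_one Hsig), (ob_mulr1 HS); reflexivity.
Qed.

Lemma tens_eval_tensT ld :
  sumlist S (map tens_eval (map tensT ld)) = sigma (sumlist T (map (@proj1_sig _ _) ld)).
Proof.
  induction ld as [|d ld IH]; [symmetry; apply (mor_zero Hsig)|].
  rewrite !map_cons, !sumlist_cons, IH, (mor_add Hsig); f_equal.
  unfold tens_eval, tensT; cbn [fst snd]; rewrite mval_one; apply (obH_mul1 HS).
Qed.

Lemma tens_eval_Rtens_eq l l' : @Rtens_eq (obmon Hk) (obmon HB) (obmon HT) (phim Hphi) v l l' ->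
  sumlist S (map tens_eval l) = sumlist S (map tens_eval l').
Proof.
  intros [[-> ->]|[[-> ->]|(a & c & d & -> & ->)]]; cbn [map]; rewrite ?sumlist_cons;
    unfold tens_eval; cbn [fst snd].
  - rewrite mval_zero, (obH_mul0 HS); apply (obH_add0 HS).
  - rewrite mval_one.
    change (proj1_sig (m_zero (obmon HT))) with (ob_zero T).
    rewrite (mor_zero Hsig), (ob_mulr0 HS); apply (obH_add0 HS).
  - f_equal; destruct Hw as [(_ & _ & HM)%(is_multP HB) _].
    rewrite HM; unfold mval at 2; rewrite Hext.
    change (proj1_sig (m_mul (obmon HT) (v a) d))
      with (ob_mul T (proj1_sig (v a)) (proj1_sig d)).
    rewrite (mor_mul Hsig); symmetry; apply (obH_mulA HS).
Qed.

Lemma tens_eval_sound l l' : genle trel l l' ->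
  ob_le S (sumlist S (map tens_eval l)) (sumlist S (map tens_eval l')).
Proof.
  apply (genle_sound HS tens_eval tens_eval_mul tens_eval_zero).
  intros ? ? [H|[H|[(lc & lc' & -> & -> & H)|(ld & ld' & -> & -> & H)]]].
  - apply (ob_le_eq HS), tens_eval_Rtens_eq, H.
  - apply (ob_le_eq HS); symmetry; apply tens_eval_Rtens_eq, H.
  - fold (map tensB lc) (map tensB lc'); rewrite !tens_eval_tensB.
    unfold Bmon in H; rewrite !pres_sum, pres_le in H.
    apply (genle_Rmon_sound HS); [apply Hw|eapply valuation_monomial_monotone; eassumption|exact H].
  - fold (map tensT ld) (map tensT ld'); rewrite !tens_eval_tensT; apply (mor_le Hsig), H.
Qed.

Definition hom_of_val_fun (x : ob_car (pres trel)) : ob_car S :=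
  sumlist S (map tens_eval (rep x)).

Lemma hom_of_val_cls l : hom_of_val_fun (cls trel l) = sumlist S (map tens_eval l).
Proof.
  unfold hom_of_val_fun; destruct (rep_cls _ trel l) as [H1 H2].
  apply (obH_le_antisym HS); apply tens_eval_sound; assumption.
Qed.

Lemma hom_of_val_is_mor : is_mor (tropB Hk HB HT Hphi v) S hom_of_val_fun.
Proof.
  change (is_mor (pres trel) S hom_of_val_fun); constructor.
  - apply hom_of_val_cls.
  - change (ob_one (pres trel)) with (cls trel (map tensB [m_one (obmon HB)])).
    rewrite hom_of_val_cls, tens_eval_tensB, map_cons, sumlist_cons, mval_one.
    apply (ob_addr0 HS).
  - intros x y; destruct (cls_surj x) as [a ->], (cls_surj y) as [b ->].
    rewrite pres_add, !hom_of_val_cls, map_app; apply (sumlist_app HS).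
  - intros x y; destruct (cls_surj x) as [a ->], (cls_surj y) as [b ->].
    rewrite pres_mul, !hom_of_val_cls by exact tmon_mulC.
    apply (sumlist_lmul HS), tens_eval_mul.
  - intros x y; destruct (cls_surj x) as [a ->], (cls_surj y) as [b ->].
    rewrite pres_le, !hom_of_val_cls; apply tens_eval_sound.
  - intros x [[b t] ->]; rewrite hom_of_val_cls; simpl; rewrite (ob_addr0 HS).
    unfold tens_eval, mval; cbn [fst snd].
    apply (obH_monoM HS); [apply proj2_sig|apply (mor_mono Hsig), proj2_sig].
Qed.

Lemma hom_of_val_tropT t : hom_of_val_fun (tropT Hk HB HT Hphi v t) = sigma t.
Proof.
  destruct (obH_gen HT t) as [l E].
  rewrite (tropT_cls l) by (symmetry; exact E).
  rewrite hom_of_val_cls, tens_eval_tensT, E; reflexivity.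
Qed.

Definition hom_of_val : HomT Hk HB HT Hphi v S sigma :=
  exist _ hom_of_val_fun (conj hom_of_val_is_mor hom_of_val_tropT).

Lemma valset_of_hom_of_val : valset_of_hom HS hom_of_val = exist _ w (conj Hw Hext).
Proof.
  apply sig_eq; extensionality b; apply sig_eq; simpl.
  change [tensB b] with (map tensB [b]).
  rewrite hom_of_val_cls, tens_eval_tensB; apply (ob_addr0 HS).
Qed.

End HomOfValuation.

Lemma valset_of_hom_bijective (S : OB) (HS : is_OB S) (sigma : ob_car T -> ob_car S) :
  is_mor T S sigma -> totally_positive T -> bijective (@valset_of_hom S HS sigma).
Proof.
  intros Hsig Tpos; split.
  - intros h h' E; apply hom_ext; [exact HS|]; intro b.
    apply (f_equal (fun y => mval (proj1_sig y) b)) in E; exact E.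
  - intros [w [Hw Hext]].
    exists (hom_of_val Hsig (totally_positive_mor Hsig Tpos) Hw Hext).
    apply valset_of_hom_of_val.
Qed.

End Tropicalization.

Theorem theoremA (k B T : OB) (Hk : is_OB k) (HB : is_OB B) (HT : is_OB T)
  (phi : ob_car k -> ob_car B) (Hphi : is_mor k B phi)
  (v : msort k -> msort T) (Hv : is_valuation Hk HT v)
  (Tpos : totally_positive T) :
  is_OB (tropB Hk HB HT Hphi v) /\
  is_mor T (tropB Hk HB HT Hphi v) (tropT Hk HB HT Hphi v) /\
  exists Phi : forall (S : OB) (HS : is_OB S) (sigma : ob_car T -> ob_car S),
      is_mor T S sigma ->
      HomT Hk HB HT Hphi v S sigma -> ValSet HB Hphi v HS sigma,
    (forall S HS sigma Hsigma, bijective (Phi S HS sigma Hsigma)) /\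
    (forall S HS sigma Hsigma S' HS' sigma' Hsigma'
            (u : ob_car S -> ob_car S'),
        is_mor S S' u -> (forall t, u (sigma t) = sigma' t) ->
        forall (h : HomT Hk HB HT Hphi v S sigma)
               (h' : HomT Hk HB HT Hphi v S' sigma'),
          (forall x, proj1_sig h' x = u (proj1_sig h x)) ->
          forall b : msort B,
            proj1_sig (proj1_sig (Phi S' HS' sigma' Hsigma' h') b) =
            u (proj1_sig (proj1_sig (Phi S HS sigma Hsigma h) b))).
Proof.
  split; [apply tropB_is_OB|]; split; [apply tropT_is_mor|].
  exists (fun S HS sigma _ h => valset_of_hom HS h); split.
  - intros S HS sigma Hsigma; apply valset_of_hom_bijective; assumption.
  - intros S HS sigma Hsigma S' HS' sigma' Hsigma' u Hu Hcomp h h' Hh b; apply Hh.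
Qed.
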